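(* Consider a fixed-wing UAV with constant speed $V_g>0$ and kinematics $$\dot x_p=V_g\cos\gamma\cos\chi,\ \dot y_p=V_g\cos\gamma\sin\chi,\ \dot z_p=V_g\sin\gamma,\quad \dot\chi=\frac{a_{yc}}{V_g\cos\gamma}+d_\chi,\ \dot\gamma=\frac{a_{zc}-g\cos\gamma}{V_g}+d_\gamma,$$ with disturbances satisfying $\sqrt{d_\chi^2+d_\gamma^2}\le L_d$, tracking a virtual target $(x_c,y_c,z_c)$. Let $k_q>0$, $0<\delta<\pi/2$, and apply the modified guidance law $$a_{yc}^*=(k_q\sin\eta^{lat}+f_{lat})V_g\cos\gamma,\qquad a_{zc}^*=(k_q\sin\eta^{lon}+f_{lon})V_g+g\cos\gamma,$$ with compensation terms $f_{lat}=\dot C_1-f_\chi$, $f_{lon}=\dot C_2-f_\gamma$, where $f_\chi,f_\gamma$ are such that for some $\tau>0$, at every state with $|\eta^{lat}|\le\delta$, $|\eta^{lon}|\le\delta$ and $(\sin\eta^{lat}\cos\eta^{lat},\sin\eta^{lon}\cos\eta^{lon})\ne(0,0)$, $$\frac{f_\chi\sin\eta^{lat}\cos\eta^{lat}+f_\gamma\sin\eta^{lon}\cos\eta^{lon}}{\sqrt{\sin^2\eta^{lat}\cos^2\eta^{lat}+\sin^2\eta^{lon}\cos^2\eta^{lon}}}+L_d+\tau\le0.$$ Then along closed-loop trajectories satisfying $|\eta^{lon}|\le\delta$ and $|\eta^{lat}|\le\delta$, the look-ahead angles $\eta^{lat},\eta^{lon}$ converge to zero in finite time, with settling time bounded by 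$$T\le\frac{1}{k_q\cos\delta}\ln\!\left(1+\frac{k_q}{\tau}\sqrt{\sin^2\eta^{lon}(0)+\sin^2\eta^{lat}(0)}\right).$$
   Context: $\chi$ is the track angle, $\gamma$ the flight-path angle (with $\cos\gamma\neq0$), $g$ gravitational acceleration, $a_{yc},a_{zc}$ lateral and longitudinal acceleration commands. The line-of-sight angles are $C_1=\tan^{-1}\frac{y_c-y_p}{x_c-x_p}$ and $C_2=\tan^{-1}\frac{z_c-z_p}{\sqrt{(x_c-x_p)^2+(y_c-y_p)^2}}$, and the look-ahead angles are $\eta^{lat}=C_1-\chi$, $\eta^{lon}=C_2-\gamma$; $\dot C_1,\dot C_2$ are their time derivatives along the trajectory. No saturation of the commands is imposed in this statement. *)

From Stdlib Require Import Reals.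
From Coquelicot Require Import Coquelicot.
Open Scope R_scope.

Definition los_C1 (xc yc xp yp : R) : R := atan ((yc - yp) / (xc - xp)).
Definition los_C2 (xc yc zc xp yp zp : R) : R :=
  atan ((zc - zp) / sqrt ((xc - xp) ^ 2 + (yc - yp) ^ 2)).

Definition C1_t (xc yc xp yp : R -> R) (t : R) : R :=
  los_C1 (xc t) (yc t) (xp t) (yp t).
Definition C2_t (xc yc zc xp yp zp : R -> R) (t : R) : R :=
  los_C2 (xc t) (yc t) (zc t) (xp t) (yp t) (zp t).

Definition eta_lat (xc yc xp yp chi : R -> R) (t : R) : R :=
  C1_t xc yc xp yp t - chi t.
Definition eta_lon (xc yc zc xp yp zp gam : R -> R) (t : R) : R :=
  C2_t xc yc zc xp yp zp t - gam t.

From Stdlib Require Import Reals Lra Lia Psatz.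
From Coquelicot Require Import Coquelicot.
Open Scope R_scope.

(* Let V := sqrt (sin^2 eta_lat + sin^2 eta_lon).  Along the closed loop each look-ahead
   angle obeys eta' = - k_q sin eta + f - d, and the compensation condition together with
   Cauchy-Schwarz for the disturbance gives V' <= - cos delta (k_q V + tau) wherever V > 0.
   Hence G := (k_q V + tau) exp (k_q cos delta t) does not increase while V > 0, and V
   cannot leave 0, since G would then exceed its value tau exp (k_q cos delta s) at the
   last zero s.  So G t <= G 0 whenever V t > 0, which bounds t by the settling time;
   afterwards V = 0, and |eta| <= delta < pi turns sin eta = 0 into eta = 0. *)

Lemma sin_eq_0_Rabs_lt_PI x : Rabs x < PI -> sin x = 0 -> x = 0.
Proof.
  intros hx hsin.
  destruct (Rtotal_order x 0) as [hneg|[hz|hpos]]; [exfalso| assumption |exfalso].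
  - rewrite Rabs_left in hx by lra.
    assert (0 < sin (- x)) by (apply sin_gt_0; lra).
    rewrite sin_neg in *; lra.
  - rewrite Rabs_right in hx by lra.
    assert (0 < sin x) by (apply sin_gt_0; lra); lra.
Qed.

Lemma cos_le_cos_Rabs x delta : delta <= PI -> Rabs x <= delta -> cos delta <= cos x.
Proof.
  intros hd hx.
  destruct (Rcase_abs x) as [hneg|hpos].
  - rewrite Rabs_left in hx by lra. rewrite <- (cos_neg x).
    apply cos_decr_1; lra.
  - rewrite Rabs_right in hx by lra. apply cos_decr_1; lra.
Qed.

Lemma lookahead_rate_bound (e1 e2 kq tau delta Ld f1 f2 d1 d2 : R) :
  0 <= kq -> 0 <= tau -> delta < PI / 2 ->
  Rabs e1 <= delta -> Rabs e2 <= delta ->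
  sqrt (d1 ^ 2 + d2 ^ 2) <= Ld ->
  ((sin e1 * cos e1, sin e2 * cos e2) <> (0, 0) ->
     (f1 * (sin e1 * cos e1) + f2 * (sin e2 * cos e2))
       / sqrt (sin e1 ^ 2 * cos e1 ^ 2 + sin e2 ^ 2 * cos e2 ^ 2)
       + Ld + tau <= 0) ->
  0 < sin e1 ^ 2 + sin e2 ^ 2 ->
  (sin e1 * cos e1 * (- kq * sin e1 + f1 - d1)
     + sin e2 * cos e2 * (- kq * sin e2 + f2 - d2))
    / sqrt (sin e1 ^ 2 + sin e2 ^ 2)
  <= - cos delta * (kq * sqrt (sin e1 ^ 2 + sin e2 ^ 2) + tau).
Proof.
  intros hkq htau hdelta h1 h2 hdist hf hS.
  pose proof PI_RGT_0.
  assert (hcd : 0 < cos delta) by (apply cos_gt_0; pose proof (Rabs_pos e1); lra).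
  assert (hc1 := cos_le_cos_Rabs e1 delta ltac:(lra) h1).
  assert (hc2 := cos_le_cos_Rabs e2 delta ltac:(lra) h2).
  set (s1 := sin e1) in *; set (s2 := sin e2) in *.
  set (c1 := cos e1) in *; set (c2 := cos e2) in *; set (cd := cos delta) in *.
  set (V := sqrt (s1 ^ 2 + s2 ^ 2)).
  assert (hV : 0 < V) by (apply sqrt_lt_R0; lra).
  set (a := s1 * c1) in *; set (b := s2 * c2) in *.
  replace (s1 ^ 2 * c1 ^ 2 + s2 ^ 2 * c2 ^ 2) with (a ^ 2 + b ^ 2) in hf by (unfold a, b; ring).
  set (W := sqrt (a ^ 2 + b ^ 2)) in *.
  assert (hWV : cd * V <= W).
  { unfold V, W; rewrite <- (sqrt_pow2 cd), <- sqrt_mult_alt by nra.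
    assert (cd ^ 2 <= c1 ^ 2) by nra; assert (cd ^ 2 <= c2 ^ 2) by nra.
    apply sqrt_le_1_alt; unfold a, b; nra. }
  assert (hW : 0 < W) by nra.
  assert (hab : (a, b) <> (0, 0)).
  { intros [= ha hb]. unfold W in hW; rewrite ha, hb in hW.
    rewrite pow_i, Rplus_0_r, sqrt_0 in hW by lia; lra. }
  assert (hcomp : f1 * a + f2 * b <= - (Ld + tau) * W).
  { specialize (hf hab).
    replace (f1 * a + f2 * b) with ((f1 * a + f2 * b) / W * W) by (field; lra).
    nra. }
  assert (hdist' : - (d1 * a + d2 * b) <= Ld * W).
  { pose proof (sqrt_cauchy (- d1) (- d2) a b) as hcs.
    unfold Rsqr in hcs; rewrite <- !Rsqr_pow2 in hdist; unfold Rsqr in hdist.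
    replace (- d1 * - d1 + - d2 * - d2) with (d1 * d1 + d2 * d2) in hcs by ring.
    replace (a * a + b * b) with (a ^ 2 + b ^ 2) in hcs by ring.
    fold W in hcs; nra. }
  assert (hdamp : cd * V ^ 2 <= s1 ^ 2 * c1 + s2 ^ 2 * c2).
  { unfold V; rewrite pow2_sqrt by nra. nra. }
  apply (Rmult_le_reg_r V); [assumption|].
  unfold Rdiv; rewrite Rmult_assoc, Rinv_l, Rmult_1_r by lra.
  replace (a * (- kq * s1 + f1 - d1) + b * (- kq * s2 + f2 - d2))
    with (- kq * (s1 ^ 2 * c1 + s2 ^ 2 * c2) + (f1 * a + f2 * b) - (d1 * a + d2 * b))
    by (unfold a, b; ring).
  nra.
Qed.

Lemma le_of_is_derive_nonpos_right (G : R -> R) (s t : R) :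
  s <= t -> filterlim G (at_right s) (locally (G s)) ->
  (forall u, s < u <= t -> exists l, is_derive G u l /\ l <= 0) ->
  G t <= G s.
Proof.
  intros hst hG0 hder.
  destruct hst as [hst| ->]; [|lra].
  assert (hdiff : forall u, s < u <= t -> is_derive G u (Derive G u) /\ Derive G u <= 0).
  { intros u hu; destruct (hder u hu) as [l [hl hl0]].
    now rewrite (is_derive_unique G u l hl). }
  assert (hmono : forall u, s < u < t -> G t <= G u).
  { intros u hu.
    destruct (MVT_gen G u t (Derive G)) as [x [hx hGx]];
      rewrite ?Rmin_left, ?Rmax_right in * by lra.
    - intros x hx; apply hdiff; lra.
    - intros x hx; apply continuity_pt_filterlim, (ex_derive_continuous (K:=R_AbsRing) (V:=R_NormedModule)).
      eexists; apply hdiff; lra.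
    - assert (Derive G x <= 0) by (apply hdiff; lra). nra. }
  apply (closed_filterlim_loc G (fun y => G t <= y) (G s) hG0); [|apply closed_ge].
  assert (hts : 0 < t - s) by lra.
  exists (mkposreal _ hts); intros u hu hsu.
  change (Rabs (u - s) < t - s) in hu; apply Rabs_def2 in hu.
  apply hmono; lra.
Qed.

Lemma last_zero_before (f : R -> R) (t : R) :
  0 < t -> f t <> 0 -> (forall u, 0 < u <= t -> continuity_pt f u) ->
  exists s, 0 <= s < t /\ (s = 0 \/ f s = 0) /\ forall u, s < u <= t -> f u <> 0.
Proof.
  intros ht hft hcont.
  set (E := fun u => 0 <= u <= t /\ (u = 0 \/ f u = 0)).
  destruct (completeness E) as [s [hub hlub]].
  { exists t; intros u [hu _]; lra. }
  { exists 0; split; [lra|now left]. }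
  assert (hs0 : 0 <= s) by (apply hub; split; [lra|now left]).
  assert (hst : s <= t) by (apply hlub; intros u [hu _]; lra).
  assert (hafter : forall u, s < u <= t -> f u <> 0).
  { intros u hu hfu. assert (u <= s) by (apply hub; split; [lra|now right]). lra. }
  assert (hs : s = 0 \/ f s = 0).
  { destruct (Req_dec s 0) as [|hs]; [now left|right].
    destruct (Req_dec (f s) 0) as [|hfs]; [assumption|exfalso].
    destruct (hcont s ltac:(lra) (Rabs (f s)) (Rabs_pos_lt _ hfs)) as [a [ha hnear]].
    set (d := Rmin a s / 2).
    assert (hd : 0 < d < a /\ d < s) by (unfold d; split; [split|]; apply Rmin_case_strong; lra).
    enough (s <= s - d) by lra.
    apply hlub; intros u [hu [hu0|hfu]]; [lra|].
    destruct (Rle_dec u (s - d)) as [|hud]; [assumption|exfalso].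
    assert (u <= s) by (apply hub; split; [lra|now right]).
    destruct (Req_dec u s) as [->|hus]; [contradiction|].
    assert (hb : Rabs (f u - f s) < Rabs (f s)).
    { apply hnear; split; [split; [exact I|congruence]|].
      simpl; unfold R_dist; rewrite Rabs_left1; lra. }
    rewrite hfu, Rminus_0_l, Rabs_Ropp in hb; lra. }
  exists s; repeat split; try assumption.
  destruct hst as [| ->]; [assumption|].
  destruct hs; [lra|contradiction].
Qed.

Lemma is_derive_lyapunov (e1 e2 : R -> R) (t d1 d2 kq tau c : R) :
  is_derive e1 t d1 -> is_derive e2 t d2 -> 0 < sin (e1 t) ^ 2 + sin (e2 t) ^ 2 ->
  is_derive (fun t => (kq * sqrt (sin (e1 t) ^ 2 + sin (e2 t) ^ 2) + tau) * exp (c * t)) t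
    (exp (c * t) *
      (kq * ((sin (e1 t) * cos (e1 t) * d1 + sin (e2 t) * cos (e2 t) * d2)
              / sqrt (sin (e1 t) ^ 2 + sin (e2 t) ^ 2))
       + c * (kq * sqrt (sin (e1 t) ^ 2 + sin (e2 t) ^ 2) + tau))).
Proof.
  intros h1 h2 hS.
  auto_derive.
  - repeat split; try (eexists; eassumption); lra.
  - replace (Derive (fun x : R => e1 x) t) with d1 by (symmetry; now apply is_derive_unique).
    replace (Derive (fun x : R => e2 x) t) with d2 by (symmetry; now apply is_derive_unique).
    replace (sin (e1 t) * (sin (e1 t) * 1) + sin (e2 t) * (sin (e2 t) * 1))
      with (sin (e1 t) ^ 2 + sin (e2 t) ^ 2) by ring.
    assert (0 < sqrt (sin (e1 t) ^ 2 + sin (e2 t) ^ 2)) by (apply sqrt_lt_R0; lra).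
    field; lra.
Qed.

Lemma filterlim_comp_ex_derive {T} (F : (T -> Prop) -> Prop) {FF : Filter F}
  (h : R -> R) (f : T -> R) (a : R) :
  (forall x, ex_derive h x) -> filterlim f F (locally a) ->
  filterlim (fun x => h (f x)) F (locally (h a)).
Proof.
  intros hh hf.
  apply (filterlim_comp _ _ _ f h F (locally a) _ hf).
  apply (ex_derive_continuous (K:=R_AbsRing) (V:=R_NormedModule)), hh.
Qed.

Lemma filterlim_Rminus {T} (F : (T -> Prop) -> Prop) {FF : Filter F}
  (f g : T -> R) (a b : R) :
  filterlim f F (locally a) -> filterlim g F (locally b) ->
  filterlim (fun x => f x - g x) F (locally (a - b)).
Proof.
  intros hf hg.
  apply (filterlim_comp_2 (H := locally (- b)) f (fun x => - g x) Rplus hf).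
  - apply (filterlim_comp_ex_derive F Ropp g b); [intros; auto_derive; auto|exact hg].
  - apply (filterlim_plus (K:=R_AbsRing) (V:=R_NormedModule)).
Qed.

Lemma filterlim_sqrt_sin2_plus {T} (F : (T -> Prop) -> Prop) {FF : Filter F}
  (f g : T -> R) (a b : R) :
  filterlim f F (locally a) -> filterlim g F (locally b) ->
  filterlim (fun x => sqrt (sin (f x) ^ 2 + sin (g x) ^ 2)) F
    (locally (sqrt (sin a ^ 2 + sin b ^ 2))).
Proof.
  intros hf hg.
  apply (filterlim_comp _ _ _ (fun x => sin (f x) ^ 2 + sin (g x) ^ 2) sqrt F
           (locally (sin a ^ 2 + sin b ^ 2))).
  - apply (filterlim_comp_2 (G := locally (sin a ^ 2)) (H := locally (sin b ^ 2))
             (fun x => sin (f x) ^ 2) (fun x => sin (g x) ^ 2) Rplus).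
    + apply (filterlim_comp_ex_derive F (fun x => sin x ^ 2)); [intros; auto_derive; auto|exact hf].
    + apply (filterlim_comp_ex_derive F (fun x => sin x ^ 2)); [intros; auto_derive; auto|exact hg].
    + apply (filterlim_plus (K:=R_AbsRing) (V:=R_NormedModule)).
  - apply continuity_pt_filterlim, continuity_pt_sqrt; nra.
Qed.

Lemma filterlim_at_right_of_locally {U} (f : R -> U) (s : R) (H : (U -> Prop) -> Prop) :
  filterlim f (locally s) H -> filterlim f (at_right s) H.
Proof. apply filterlim_filter_le_1, filter_le_within. Qed.

Lemma is_derive_lookahead (C psi : R -> R) (t kq Cd u d f : R) :
  is_derive C t Cd -> is_derive psi t (u + d) ->
  u = kq * sin (C t - psi t) + (Cd - f) ->
  is_derive (fun t => C t - psi t) t (- kq * sin (C t - psi t) + f - d).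
Proof.
  intros hC hpsi hu.
  replace (- kq * sin (C t - psi t) + f - d) with (Cd - (u + d)) by (rewrite hu; ring).
  exact (is_derive_minus C psi t Cd (u + d) hC hpsi).
Qed.

Section LookaheadConvergence.

Variables (kq delta tau Ld : R) (el eo fchi fgam dchi dgam : R -> R).

Hypothesis hkq : 0 < kq.
Hypothesis hdelta : 0 < delta < PI / 2.
Hypothesis htau : 0 < tau.
Hypothesis hel : forall t, 0 < t -> is_derive el t (- kq * sin (el t) + fchi t - dchi t).
Hypothesis heo : forall t, 0 < t -> is_derive eo t (- kq * sin (eo t) + fgam t - dgam t).
Hypothesis hel0 : filterlim el (at_right 0) (locally (el 0)).
Hypothesis heo0 : filterlim eo (at_right 0) (locally (eo 0)).
Hypothesis hd : forall t, 0 < t -> sqrt (dchi t ^ 2 + dgam t ^ 2) <= Ld.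
Hypothesis hf : forall t, 0 < t -> Rabs (el t) <= delta -> Rabs (eo t) <= delta ->
  (sin (el t) * cos (el t), sin (eo t) * cos (eo t)) <> (0, 0) ->
  (fchi t * (sin (el t) * cos (el t)) + fgam t * (sin (eo t) * cos (eo t)))
    / sqrt (sin (el t) ^ 2 * cos (el t) ^ 2 + sin (eo t) ^ 2 * cos (eo t) ^ 2)
    + Ld + tau <= 0.
Hypothesis hreg : forall t, 0 <= t -> Rabs (el t) <= delta /\ Rabs (eo t) <= delta.

Let c := kq * cos delta.
Let V (t : R) := sqrt (sin (el t) ^ 2 + sin (eo t) ^ 2).
Let G (t : R) := (kq * V t + tau) * exp (c * t).

Lemma V_continuous s : 0 < s -> filterlim V (locally s) (locally (V s)).
Proof.
  intros hs.
  apply (filterlim_sqrt_sin2_plus (locally s));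
    apply (ex_derive_continuous (K:=R_AbsRing) (V:=R_NormedModule));
    eexists; [apply hel|apply heo]; exact hs.
Qed.

Lemma G_right_continuous s : 0 <= s -> filterlim G (at_right s) (locally (G s)).
Proof.
  intros hs.
  apply (filterlim_comp_2 (G := locally (kq * V s + tau)) (H := locally (exp (c * s)))
           (fun t => kq * V t + tau) (fun t => exp (c * t)) Rmult).
  - apply (filterlim_comp_ex_derive _ (fun v => kq * v + tau)); [intros; auto_derive; auto|].
    destruct hs as [hs| <-].
    + now apply filterlim_at_right_of_locally, V_continuous.
    + now apply (filterlim_sqrt_sin2_plus (at_right 0)).
  - apply filterlim_at_right_of_locally, (filterlim_comp_ex_derive _ (fun t => exp (c * t))).
    + intros; auto_derive; auto.
    + apply filterlim_id.
  - apply (filterlim_mult (K:=R_AbsRing)).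
Qed.

Lemma c_pos : 0 < c.
Proof. apply Rmult_lt_0_compat; [lra|apply cos_gt_0; lra]. Qed.

Lemma V_pos t : V t <> 0 -> 0 < V t.
Proof.
  intros hV.
  destruct (sqrt_pos (sin (el t) ^ 2 + sin (eo t) ^ 2)); [assumption|].
  now destruct hV.
Qed.

Lemma G_derive_nonpos t : 0 < t -> 0 < V t -> exists l, is_derive G t l /\ l <= 0.
Proof.
  intros ht hV.
  assert (hS : 0 < sin (el t) ^ 2 + sin (eo t) ^ 2)
    by (apply sqrt_lt_0_alt; rewrite sqrt_0; exact hV).
  destruct (hreg t ltac:(lra)) as [h1 h2].
  pose proof (lookahead_rate_bound (el t) (eo t) kq tau delta Ld (fchi t) (fgam t)
                (dchi t) (dgam t) ltac:(lra) ltac:(lra) ltac:(lra) h1 h2 (hd t ht)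
                (hf t ht h1 h2) hS) as hrate.
  eexists; split; [exact (is_derive_lyapunov el eo t _ _ kq tau c (hel t ht) (heo t ht) hS)|].
  assert (hexp := exp_pos (c * t)).
  apply Rmult_le_0_l; [lra|].
  fold (V t) in *; unfold c; nra.
Qed.

(* [G] does not increase after the last zero [s] of [V] before [t], and [s > 0] is
   impossible because [G s = tau * exp (c * s) < G t]. *)
Lemma G_le_G0 t : 0 <= t -> 0 < V t -> G t <= G 0.
Proof.
  intros ht hVt.
  destruct ht as [ht| <-]; [|lra].
  destruct (last_zero_before V t ht ltac:(lra)) as (s & hs & hs0 & hpos).
  { intros u hu; apply continuity_pt_filterlim, V_continuous; lra. }
  assert (hGts : G t <= G s).
  { apply le_of_is_derive_nonpos_right; [lra|apply G_right_continuous; lra|].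
    intros u hu; apply G_derive_nonpos; [lra|apply V_pos, hpos, hu]. }
  destruct hs0 as [<-|hVs]; [assumption|exfalso].
  pose proof c_pos.
  assert (exp (c * s) < exp (c * t)) by (apply exp_increasing; nra).
  unfold G in hGts; rewrite hVs in hGts.
  assert (0 < kq * V t * exp (c * t)) by (apply Rmult_lt_0_compat; [nra|apply exp_pos]).
  nra.
Qed.

Let settling_time := 1 / c * ln (1 + kq / tau * V 0).

Lemma settling_time_nonneg : 0 <= settling_time.
Proof.
  pose proof c_pos.
  assert (0 <= kq / tau * V 0)
    by (apply Rmult_le_pos; [apply Rlt_le, Rdiv_lt_0_compat|apply sqrt_pos]; lra).
  apply Rmult_le_pos; [apply Rlt_le, Rdiv_lt_0_compat; lra|].
  rewrite <- ln_1 at 1; apply ln_le; lra.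
Qed.

Lemma V_eq_0_after t : settling_time <= t -> V t = 0.
Proof.
  intros hT.
  pose proof c_pos as hc.
  assert (ht : 0 <= t) by (eapply Rle_trans; [apply settling_time_nonneg|exact hT]).
  destruct (Req_dec (V t) 0) as [|hV0]; [assumption|exfalso].
  pose proof (V_pos t hV0) as hVt.
  pose proof (G_le_G0 t ht hVt) as hG; unfold G in hG.
  rewrite Rmult_0_r, exp_0, Rmult_1_r in hG.
  assert (hexp : exp (c * t) < 1 + kq / tau * V 0).
  { assert (0 < kq * V t * exp (c * t)) by (apply Rmult_lt_0_compat; [nra|apply exp_pos]).
    apply (Rmult_lt_reg_l tau); [lra|].
    replace (tau * (1 + kq / tau * V 0)) with (kq * V 0 + tau) by (field; lra).
    nra. }
  apply ln_increasing in hexp; [|apply exp_pos].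
  rewrite ln_exp in hexp.
  assert (t < settling_time); [|lra].
  replace t with (1 / c * (c * t)) at 1 by (field; lra).
  apply Rmult_lt_compat_l; [apply Rdiv_lt_0_compat|]; lra.
Qed.

Lemma lookahead_finite_time :
  exists T, 0 <= T /\
    T <= 1 / (kq * cos delta) *
         ln (1 + kq / tau * sqrt (sin (eo 0) ^ 2 + sin (el 0) ^ 2)) /\
    forall t, T <= t -> el t = 0 /\ eo t = 0.
Proof.
  rewrite (Rplus_comm (sin (eo 0) ^ 2)).
  exists settling_time; split; [apply settling_time_nonneg|split; [apply Rle_refl|]].
  intros t hT.
  pose proof (V_eq_0_after t hT) as hVt.
  apply sqrt_eq_0 in hVt; [|nra].
  destruct (hreg t) as [h1 h2]; [eapply Rle_trans; [apply settling_time_nonneg|exact hT]|].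
  split; apply sin_eq_0_Rabs_lt_PI; nra.
Qed.

End LookaheadConvergence.

Theorem theorem3
  (Vg g kq delta tau Ld : R)
  (xp yp zp chi gam : R -> R)        (* UAV state *)
  (xc yc zc : R -> R)                (* virtual target *)
  (dchi dgam : R -> R)               (* disturbances *)
  (ayc azc : R -> R)                 (* acceleration commands *)
  (fchi fgam : R -> R)               (* compensation terms along the trajectory *)
  (C1d C2d : R -> R)                 (* time derivatives of C1, C2 *)
  (hVg : 0 < Vg) (hkq : 0 < kq) (hdelta : 0 < delta < PI / 2) (htau : 0 < tau)
  (* kinematics *)
  (hx : forall t, 0 < t -> is_derive xp t (Vg * cos (gam t) * cos (chi t)))
  (hy : forall t, 0 < t -> is_derive yp t (Vg * cos (gam t) * sin (chi t)))
  (hz : forall t, 0 < t -> is_derive zp t (Vg * sin (gam t)))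
  (hchi : forall t, 0 < t ->
     is_derive chi t (ayc t / (Vg * cos (gam t)) + dchi t))
  (hgam : forall t, 0 < t ->
     is_derive gam t ((azc t - g * cos (gam t)) / Vg + dgam t))
  (hcos : forall t, 0 <= t -> cos (gam t) <> 0)
  (* disturbance bound *)
  (hd : forall t, 0 <= t -> sqrt (dchi t ^ 2 + dgam t ^ 2) <= Ld)
  (* C1dot, C2dot are the time derivatives of the LOS angles *)
  (hC1 : forall t, 0 < t -> is_derive (C1_t xc yc xp yp) t (C1d t))
  (hC2 : forall t, 0 < t -> is_derive (C2_t xc yc zc xp yp zp) t (C2d t))
  (* continuity of the trajectory at the initial time *)
  (hc0 : filterlim chi (at_right 0) (locally (chi 0)) /\
         filterlim gam (at_right 0) (locally (gam 0)) /\
         filterlim (C1_t xc yc xp yp) (at_right 0)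
                   (locally (C1_t xc yc xp yp 0)) /\
         filterlim (C2_t xc yc zc xp yp zp) (at_right 0)
                   (locally (C2_t xc yc zc xp yp zp 0)))
  (* modified guidance law, f_lat = C1dot - f_chi, f_lon = C2dot - f_gamma *)
  (hayc : forall t, 0 < t ->
     ayc t = (kq * sin (eta_lat xc yc xp yp chi t) + (C1d t - fchi t))
             * Vg * cos (gam t))
  (hazc : forall t, 0 < t ->
     azc t = (kq * sin (eta_lon xc yc zc xp yp zp gam t) + (C2d t - fgam t))
             * Vg + g * cos (gam t))
  (* condition on the compensation terms *)
  (hf : forall t, 0 <= t ->
     let el := eta_lat xc yc xp yp chi t in
     let eo := eta_lon xc yc zc xp yp zp gam t in
     Rabs el <= delta -> Rabs eo <= delta ->
     (sin el * cos el, sin eo * cos eo) <> (0, 0) ->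
     (fchi t * (sin el * cos el) + fgam t * (sin eo * cos eo))
       / sqrt ((sin el) ^ 2 * (cos el) ^ 2 + (sin eo) ^ 2 * (cos eo) ^ 2)
       + Ld + tau <= 0)
  (* the trajectory stays in the region |eta| <= delta *)
  (hreg : forall t, 0 <= t ->
     Rabs (eta_lat xc yc xp yp chi t) <= delta /\
     Rabs (eta_lon xc yc zc xp yp zp gam t) <= delta) :
  exists T, 0 <= T /\
    T <= 1 / (kq * cos delta) *
         ln (1 + kq / tau *
              sqrt ((sin (eta_lon xc yc zc xp yp zp gam 0)) ^ 2
                    + (sin (eta_lat xc yc xp yp chi 0)) ^ 2)) /\
    forall t, T <= t ->
      eta_lat xc yc xp yp chi t = 0 /\ eta_lon xc yc zc xp yp zp gam t = 0.
Proof.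
  destruct hc0 as (hchi0 & hgam0 & hC10 & hC20).
  apply (lookahead_finite_time kq delta tau Ld _ _ fchi fgam dchi dgam); try assumption.
  - intros t ht.
    apply (is_derive_lookahead _ _ t kq (C1d t) (ayc t / (Vg * cos (gam t))));
      [now apply hC1|now apply hchi|].
    rewrite (hayc t ht); unfold eta_lat; field; split; [apply hcos|]; lra.
  - intros t ht.
    apply (is_derive_lookahead _ _ t kq (C2d t) ((azc t - g * cos (gam t)) / Vg));
      [now apply hC2|now apply hgam|].
    rewrite (hazc t ht); unfold eta_lon; field; lra.
  - exact (filterlim_Rminus _ _ _ _ _ hC10 hchi0).
  - exact (filterlim_Rminus _ _ _ _ _ hC20 hgam0).
  - intros t ht; apply hd; lra.
  - intros t ht; exact (hf t (Rlt_le _ _ ht)).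
Qed.
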